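(* Let $R$ be an $h$-local domain with field of fractions $Q$, let $\Lambda$ be an $R$-algebra, and let $M$ be a finitely generated right $\Lambda$-module which is torsion-free as an $R$-module. For each maximal ideal $\mathfrak m$ of $R$ let $X(\mathfrak m)$ be a $\Lambda_\mathfrak m$-submodule of $M_\mathfrak m$, torsion-free as an $R_\mathfrak m$-module, with $X(\mathfrak m)\otimes Q=M_\mathfrak m\otimes Q$. The following are equivalent: (i) there is a $\Lambda$-submodule $N\subseteq M$, torsion-free as an $R$-module, with $N_\mathfrak m=X(\mathfrak m)$ for all maximal ideals $\mathfrak m$ of $R$; (ii) $X(\mathfrak m)=M_\mathfrak m$ for all but finitely many maximal ideals $\mathfrak m$ of $R$. Moreover, if each $X(\mathfrak m)$ is finitely generated as a $\Lambda_\mathfrak m$-module, then such an $N$ is finitely generated as a $\Lambda$-module.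
   Context: A commutative domain is $h$-local if every non-zero element lies in only finitely many maximal ideals and every non-zero prime ideal is contained in a unique maximal ideal. A module is torsion-free over $R$ if $M\to M\otimes_R Q$ is injective; submodules of $M$ and $M_\mathfrak m$ are viewed inside $M\otimes_R Q$. *)

From HB Require Import structures.
From mathcomp Require Import all_boot all_order all_algebra fraction.
From mathcomp Require Import boolp classical_sets cardinality.
Set Implicit Arguments. Unset Strict Implicit. Unset Printing Implicit Defensive.
Import GRing.Theory.
Local Open Scope ring_scope.
Local Open Scope classical_set_scope.

Section Ideals.
Variable R : comNzRingType.

Definition is_ideal (I : set R) : Prop :=
  I 0 /\ (forall x y, I x -> I y -> I (x + y)) /\ (forall r x, I x -> I (r * x)).

Definition maximal_ideal (I : set R) : Prop :=
  is_ideal I /\ ~ I 1 /\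
  (forall J : set R, is_ideal J -> I `<=` J -> J = I \/ J 1).

Definition prime_ideal (P : set R) : Prop :=
  is_ideal P /\ ~ P 1 /\ (forall a b, P (a * b) -> P a \/ P b).

Definition h_local : Prop :=
  (forall a : R, a != 0 -> finite_set [set m : set R | maximal_ideal m /\ m a]) /\
  (forall P : set R, prime_ideal P -> P <> [set 0] ->
     exists m, [/\ maximal_ideal m, P `<=` m &
                  forall m', maximal_ideal m' -> P `<=` m' -> m' = m]).
End Ideals.

(* ---------- Modules inside the ambient Q-vector space V = M (x)_R Q ---------- *)
Section Modules.
Variables (R : idomainType) (L : algType R) (V : lmodType {fraction R}).
Variable act : V -> L -> V.

Local Notation "x %:F" := (@tofrac R x).

(* V is a right L-module, Q-linear in V, compatible with the R-algebra
   structure of L (the action of L (x) Q on M (x) Q, restricted to L). *)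
Definition is_right_action : Prop :=
  (forall v, act v 1 = v) /\
  [/\ (forall v a b, act v (a * b) = act (act v a) b),
      (forall u v a, act (u + v) a = act u a + act v a),
      (forall v a b, act v (a + b) = act v a + act v b),
      (forall (k : {fraction R}) v a, act (k *: v) a = k *: act v a) &
      (forall (r : R) v a, act v (r *: a) = r%:F *: act v a)].

Definition is_Lsubmod (N : set V) : Prop :=
  [/\ N 0, (forall x y, N x -> N y -> N (x + y)),
      (forall (r : R) x, N x -> N (r%:F *: x)) &
      (forall x a, N x -> N (act x a))].

(* right L_m-submodule of V, L_m = L (x)_R R_m, m a maximal ideal *)
Definition is_loc_Lsubmod (m : set R) (X : set V) : Prop :=
  [/\ X 0, (forall x y, X x -> X y -> X (x + y)),
      (forall (r s : R) x, ~ m s -> X x -> X ((r%:F / s%:F) *: x)) &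
      (forall x a, X x -> X (act x a))].

Definition localize (m : set R) (S : set V) : set V :=
  [set v | exists x s, [/\ S x, ~ m s & v = (s%:F)^-1 *: x]].

(* image of S (x)_R Q in V: the Q-span of S *)
Definition tensorQ (S : set V) : set V :=
  [set v | exists n (k : 'I_n -> {fraction R}) (x : 'I_n -> V),
            (forall i, S (x i)) /\ v = \sum_(i < n) k i *: x i].

Definition fg_Lmod (N : set V) : Prop :=
  exists n (g : 'I_n -> V), (forall i, N (g i)) /\
    N = [set v | exists l : 'I_n -> L, v = \sum_(i < n) act (g i) (l i)].

(* finitely generated as a right L_m-module (elements of L_m are a / s) *)
Definition fg_loc_Lmod (m : set R) (X : set V) : Prop :=
  exists n (g : 'I_n -> V), (forall i, X (g i)) /\
    X = [set v | exists (l : 'I_n -> L) (s : 'I_n -> R), (forall i, ~ m (s i)) /\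
                  v = \sum_(i < n) ((s i)%:F)^-1 *: act (g i) (l i)].
End Modules.

From HB Require Import structures.
From mathcomp Require Import all_boot all_order all_algebra fraction generic_quotient.
From mathcomp Require Import boolp classical_sets cardinality.
From mathcomp Require Import ring finmap.
Set Implicit Arguments. Unset Strict Implicit. Unset Printing Implicit Defensive.
Import GRing.Theory.
Local Open Scope ring_scope.
Local Open Scope classical_set_scope.

(* The realization of X is N = M ∩ ⋂_m X(m).  Since X(m) ⊗ Q = M_m ⊗ Q and M is
   finitely generated, some r ≠ 0 has r M ⊆ X(m); when X(m) differs from M_m for
   only finitely many m, a single r works for every m.  To see that N_m = X(m), take
   x/s in X(m): h-locality yields U ∉ m that is divisible by r in R_m' for every
   other maximal m', and then U x ∈ N.  Conversely any realization N contains r M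
   for some r ≠ 0, so N_m = M_m unless r ∈ m, which happens for finitely many m only.
   Finally N is generated by r M together with lifts of generators of the finitely
   many X(m) with r ∈ m, since membership in a submodule can be tested locally at
   every maximal ideal. *)

Section Ideals.
Variable R : comNzRingType.
Implicit Types (I J P S m : set R) (a b r x y z : R).

Lemma ideal0 I : is_ideal I -> I 0.
Proof. by case. Qed.

Lemma idealD I x y : is_ideal I -> I x -> I y -> I (x + y).
Proof. by case=> _ [+ _]; apply. Qed.

Lemma idealMl I r x : is_ideal I -> I x -> I (r * x).
Proof. by case=> _ [_ +]; apply. Qed.

Lemma idealMr I r x : is_ideal I -> I x -> I (x * r).
Proof. by rewrite mulrC; apply: idealMl. Qed.

Definition ideal_adjoin P z : set R := [set x | exists y c, P y /\ x = y + c * z].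

Lemma ideal_adjoin_ideal P z : is_ideal P -> is_ideal (ideal_adjoin P z).
Proof.
move=> IP; split; first by exists 0, 0; split; [exact: ideal0|ring].
split=> [x x' [y [c [Py ->]]] [y' [c' [Py' ->]]]|r x [y [c [Py ->]]]].
  by exists (y + y'), (c + c'); split; [exact: idealD|ring].
by exists (r * y), (r * c); split; [exact: idealMl|ring].
Qed.

Lemma sub_ideal_adjoin P z : P `<=` ideal_adjoin P z.
Proof. by move=> x Px; exists x, 0; split=> //; ring. Qed.

Lemma ideal_adjoin_gen P z : is_ideal P -> ideal_adjoin P z z.
Proof. by move=> IP; exists 0, 1; split; [exact: ideal0|ring]. Qed.

Definition avoids I S := forall x, I x -> ~ S x.

Definition mult_closed S := S 1 /\ forall a b, S a -> S b -> S (a * b).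

Lemma prime_of_max_avoiding P S : mult_closed S -> is_ideal P -> avoids P S ->
  (forall J, is_ideal J -> P `<=` J -> avoids J S -> J = P) -> prime_ideal P.
Proof.
move=> [S1 SM] IP PS Pmax; split=> //; split=> [/PS//|a b Pab].
apply: contrapT => /not_orP[na nb].
have escape z : ~ P z -> exists y c, P y /\ S (y + c * z).
  move=> nPz; apply: contrapT => none; apply: nPz.
  rewrite -(Pmax (ideal_adjoin P z)); first exact: ideal_adjoin_gen.
  - exact: ideal_adjoin_ideal.
  - exact: sub_ideal_adjoin.
  by move=> x [y [c [Py ->]]] Sx; apply: none; exists y, c.
have [y [c [Py Sa]]] := escape a na.
have [y' [c' [Py' Sb]]] := escape b nb.
have Sab := SM _ _ Sa Sb; apply: (PS _ _ Sab).
have -> : (y + c * a) * (y' + c' * b) =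
          y * (y' + c' * b) + (c * a * y' + c * c' * (a * b)) by ring.
by apply: (idealD IP); [exact: idealMr|apply: (idealD IP); exact: idealMl].
Qed.

Lemma exists_max_avoiding I S : is_ideal I -> avoids I S ->
  exists P, [/\ is_ideal P, I `<=` P, avoids P S &
     forall J, is_ideal J -> P `<=` J -> avoids J S -> J = P].
Proof.
move=> II IS; pose good P := [/\ is_ideal P, I `<=` P & avoids P S].
(* [Zorn_bigcup] needs the union of the empty chain, [set0], to be admissible. *)
have [F Fgood Ftot|A [Agood Amax]] := @Zorn_bigcup R (fun P => P = set0 \/ good P).
  have goodF P x : F P -> P x -> good P.
    by move=> FP Px; case: (Fgood P FP) => // P0; rewrite P0 in Px.
  have [[P0 [x0 [FP0 P0x0]]]|none] := EM (exists P x, F P /\ P x); last first.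
    left; apply/seteqP; split=> // x [P FP Px].
    by exfalso; apply: none; exists P, x.
  right; have [IP0 IP0s _] := goodF _ _ FP0 P0x0; split.
  - split; first by exists P0 => //; exact: ideal0.
    split=> [x y [P1 FP1 P1x] [P2 FP2 P2y]|r x [P1 FP1 P1x]].
      have [IP1 _ _] := goodF _ _ FP1 P1x; have [IP2 _ _] := goodF _ _ FP2 P2y.
      case: (Ftot _ _ FP1 FP2) => [s12|s21].
        by exists P2 => //; apply: idealD => //; exact: s12.
      by exists P1 => //; apply: idealD => //; exact: s21.
    have [IP1 _ _] := goodF _ _ FP1 P1x.
    by exists P1 => //; exact: idealMl.
  - by move=> x Ix; exists P0 => //; exact: IP0s.
  - by move=> x [P1 FP1 P1x]; have [_ _] := goodF _ _ FP1 P1x; apply.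
have [IA IsA AS] : good A.
  case: Agood => // A0; exfalso; apply: (Amax I); last by right; split.
  by rewrite A0; split=> [x []|/(_ 0 (ideal0 II))].
exists A; split=> // J IJ AJ JS; apply: contrapT => JA.
apply: (Amax J); last by right; split=> //; exact: subset_trans AJ.
by split=> // AJ'; apply: JA; apply/seteqP.
Qed.

Lemma exists_maximal_ideal I : is_ideal I -> ~ I 1 ->
  exists2 m, maximal_ideal m & I `<=` m.
Proof.
move=> II I1.
have [|P [IP IsP P1 Pmax]] := exists_max_avoiding (S := [set 1]) II.
  by move=> x Ix /= x1; apply: I1; rewrite -x1.
exists P => //; split=> //; split=> [P1'|J IJ PJ]; first exact: (P1 _ P1').
have [J1|J1] := EM (J 1); [by right|left].
by apply: Pmax => // x Jx x1; apply: J1; rewrite -x1.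
Qed.

Lemma exists_maximal : exists m, maximal_ideal m.
Proof.
have I0 : is_ideal [set 0 : R].
  by split=> //; split=> [x y /= -> ->|r x /= ->]; rewrite ?addr0 ?mulr0.
have [|m Mm _] := exists_maximal_ideal I0; last by exists m.
by move=> /= /eqP; rewrite oner_eq0.
Qed.

Lemma exists_prime_avoiding I S : mult_closed S -> is_ideal I -> avoids I S ->
  exists P, [/\ prime_ideal P, I `<=` P & avoids P S].
Proof.
move=> Smul II IS; have [P [IP IsP PS Pmax]] := exists_max_avoiding II IS.
by exists P; split=> //; exact: prime_of_max_avoiding Smul IP PS Pmax.
Qed.

Lemma max_ideal m : maximal_ideal m -> is_ideal m.
Proof. by case. Qed.

Lemma max_not1 m : maximal_ideal m -> ~ m 1.
Proof. by case=> _ []. Qed.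

Lemma maximal_prime m : maximal_ideal m -> prime_ideal m.
Proof.
case=> Im [m1 mmax]; apply: (prime_of_max_avoiding (S := [set 1])) => //.
- by split=> // a b /= -> ->; rewrite mulr1.
- by move=> x mx /= x1; apply: m1; rewrite -x1.
move=> J IJ mJ J1; have [//|] := mmax J IJ mJ.
by move=> /J1 /(_ erefl) [].
Qed.

Lemma max_notM m a b : maximal_ideal m -> ~ m a -> ~ m b -> ~ m (a * b).
Proof. by move=> /maximal_prime[_ [_ mprime]] na nb /mprime[]. Qed.

Lemma max_prod_notin m (I : Type) (s : seq I) (Q : pred I) (f : I -> R) :
  maximal_ideal m -> (forall i, Q i -> ~ m (f i)) -> ~ m (\prod_(i <- s | Q i) f i).
Proof.
move=> Mm fm; apply: (big_ind (fun a => ~ m a)) => // [|a b]; [exact: max_not1|exact: max_notM].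
Qed.

Lemma max_neq0 m a : maximal_ideal m -> ~ m a -> a != 0.
Proof. by move=> /max_ideal/ideal0 m0 na; apply/eqP => a0; rewrite a0 in na. Qed.

Lemma prod_fset_set_factor (T : choiceType) (A : set T) (f : T -> R) t :
  finite_set A -> A t -> exists q, \prod_(u <- fset_set A) f u = f t * q.
Proof. by move=> fA At; rewrite (big_rem t) ?in_fset_set //; [eexists|exact: mem_set]. Qed.

Lemma hlocal_separation r m m' : h_local R -> r != 0 ->
  maximal_ideal m -> maximal_ideal m' -> m <> m' ->
  exists u b c, [/\ ~ m u, ~ m' b & u * b = r * c].
Proof.
(* Otherwise [r R] misses the multiplicative set [(R \ m)(R \ m')], so some prime
   containing [r] lies in both [m] and [m']. *)
move=> [_ hl_prime] r0 Mm Mm' mm'; apply: contrapT => none.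
pose S := [set x | exists u b, [/\ ~ m u, ~ m' b & x = u * b]].
pose I := [set x | exists c, x = r * c].
have II : is_ideal I.
  split; first by exists 0; rewrite mulr0.
  split=> [x y [c ->] [c' ->]|a x [c ->]]; first by exists (c + c'); ring.
  by exists (a * c); ring.
have Smul : mult_closed S.
  split; first by exists 1, 1; split; rewrite ?mulr1 //; exact: max_not1.
  move=> a b [u [v [nu nv ->]]] [u' [v' [nu' nv' ->]]].
  by exists (u * u'), (v * v'); split; [exact: max_notM|exact: max_notM|ring].
have IS : avoids I S.
  by move=> x [c ->] [u [b [nu nb e]]]; apply: none; exists u, b, c; rewrite e.
have [P [pP IP PS]] := exists_prime_avoiding Smul II IS.
have Pm : P `<=` m.
  move=> x Px; apply: contrapT => nx; apply: PS Px _.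
  by exists x, 1; split; rewrite ?mulr1 //; exact: max_not1.
have Pm' : P `<=` m'.
  move=> x Px; apply: contrapT => nx; apply: PS Px _.
  by exists 1, x; split; rewrite ?mul1r //; exact: max_not1.
have P0 : P <> [set 0].
  move=> P0; have : P r by apply: IP; exists 1; rewrite mulr1.
  by rewrite P0 /= => /eqP; rewrite (negbTE r0).
have [m0 [_ _ uniq]] := hl_prime P pP P0.
by apply: mm'; rewrite (uniq m Mm Pm) (uniq m' Mm' Pm').
Qed.

Lemma hlocal_multiplier r m : h_local R -> r != 0 -> maximal_ideal m ->
  exists2 U, ~ m U & forall m', maximal_ideal m' -> m' <> m ->
    exists b c, ~ m' b /\ U * b = r * c.
Proof.
move=> hl r0 Mm.
pose G := [set m' | maximal_ideal m' /\ m' r /\ m' <> m].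
have fG : finite_set G by apply: sub_finite_set (hl.1 r r0) => m' [? []].
have /choice[u hu] : forall m', exists u, G m' ->
    exists b c, [/\ ~ m u, ~ m' b & u * b = r * c].
  move=> m'; have [[Mm' [_ ne]]|] := EM (G m'); last by exists 1.
  have [u [b [c h]]] := hlocal_separation hl r0 Mm Mm' (nesym ne).
  by exists u => _; exists b, c.
exists (\prod_(m' <- fset_set G) u m').
  rewrite big_seq; apply: max_prod_notin => // m'.
  by rewrite in_fset_set // => /set_mem/hu[b [c []]].
move=> m' Mm' ne; have [m'r|nm'r] := EM (m' r); last first.
  by exists r, (\prod_(m' <- fset_set G) u m'); rewrite mulrC.
have Gm' : G m' by [].
have [b [c [_ nb e]]] := hu m' Gm'.
have [q ->] := prod_fset_set_factor u fG Gm'.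
by exists b, (c * q); split=> //; rewrite mulrAC e mulrA.
Qed.

End Ideals.

Section Fractions.
Variable R : idomainType.
Local Notation "x %:F" := (@tofrac R x).
Local Open Scope quotient_scope.

Lemma frac_repr (x : {fraction R}) : exists ab : R * R, ab.2 != 0 /\ x = ab.1%:F / ab.2%:F.
Proof.
elim/quotW: x => y; exists (frac y); split; first exact: denom_ratioP.
apply: (@mulIf _ (frac y).2%:F); first by rewrite tofrac_eq0 denom_ratioP.
rewrite mulfVK ?tofrac_eq0 ?denom_ratioP // /tofrac; unlock.
change (FracField.mul (\pi_({fraction R}) y) (\pi_({fraction R}) (Ratio (frac y).2 1))
  = \pi_({fraction R}) (Ratio (frac y).1 1)).
rewrite -FracField.pi_mul; apply/eqmodP; rewrite /= FracField.equivfE /FracField.mulf.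
by rewrite !numden_Ratio ?mulf_neq0 ?oner_neq0 ?denom_ratioP // !mulr1 mulrC.
Qed.

End Fractions.

Section Modules.
Variables (R : idomainType) (L : algType R) (V : lmodType {fraction R}).
Variable act : V -> L -> V.
Local Notation "x %:F" := (@tofrac R x).
Implicit Types (Y N S T : set V) (m : set R).

Lemma Lsubmod0 Y : is_Lsubmod act Y -> Y 0.
Proof. by case. Qed.

Lemma LsubmodD Y x y : is_Lsubmod act Y -> Y x -> Y y -> Y (x + y).
Proof. by case=> _ + _ _; apply. Qed.

Lemma LsubmodZ Y (r : R) x : is_Lsubmod act Y -> Y x -> Y (r%:F *: x).
Proof. by case=> _ _ + _; apply. Qed.

Lemma LsubmodA Y x a : is_Lsubmod act Y -> Y x -> Y (act x a).
Proof. by case=> _ _ _; apply. Qed.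

Lemma Lsubmod_sum Y n (f : 'I_n -> V) :
  is_Lsubmod act Y -> (forall i, Y (f i)) -> Y (\sum_i f i).
Proof. by move=> HY Yf; apply: (big_ind Y) => // [|x y]; [exact: Lsubmod0|exact: LsubmodD]. Qed.

Lemma Lsubmod_clear_denoms Y n (d : 'I_n -> R) (w : 'I_n -> V) :
  is_Lsubmod act Y -> (forall i, d i != 0) -> (forall i, Y (w i)) ->
  Y ((\prod_i d i)%:F *: \sum_i ((d i)%:F)^-1 *: w i).
Proof.
move=> HY d0 Yw; rewrite scaler_sumr; apply: Lsubmod_sum => // i.
rewrite scalerA (bigD1 i) //= tofracM mulrAC mulfV ?mul1r ?tofrac_eq0 //.
exact: LsubmodZ.
Qed.

Definition full Y := forall v, exists2 d : R, d != 0 & Y (d%:F *: v).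

Lemma tensorQ_setT_full Y : is_Lsubmod act Y -> tensorQ Y = [set: V] -> full Y.
Proof.
move=> HY YQ v; have : tensorQ Y v by rewrite YQ.
case=> n [k [x [Yx ->]]]; have /choice[ab Hab] := fun i => frac_repr (k i).
exists (\prod_i (ab i).2); first by apply/prodf_neq0 => i _; case: (Hab i).
have -> : \sum_i k i *: x i = \sum_i ((ab i).2%:F)^-1 *: ((ab i).1%:F *: x i).
  by apply: eq_bigr => i _; rewrite scalerA (Hab i).2 mulrC.
by apply: Lsubmod_clear_denoms => // i; [case: (Hab i)|exact: LsubmodZ].
Qed.

Lemma tensorQ_mono S T : S `<=` T -> tensorQ S `<=` tensorQ T.
Proof. by move=> ST v [n [k [x [Sx ->]]]]; exists n, k, x; split=> // i; apply: ST. Qed.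

Lemma localize_self m S : maximal_ideal m -> S `<=` localize m S.
Proof.
move=> Mm x Sx; exists x, 1; split=> //; first exact: max_not1.
by rewrite tofrac1 invr1 scale1r.
Qed.

Lemma loc_Lsubmod_inv m Y s x :
  is_loc_Lsubmod act m Y -> ~ m s -> Y x -> Y ((s%:F)^-1 *: x).
Proof. by case=> _ _ YZ _ ns /(YZ 1 s _ ns); rewrite tofrac1 div1r. Qed.

Lemma loc_Lsubmod_Lsubmod m Y : maximal_ideal m ->
  is_loc_Lsubmod act m Y -> is_Lsubmod act Y.
Proof.
move=> Mm [Y0 YD YZ Ya]; split=> // r x /(YZ r 1 _ (max_not1 Mm)).
by rewrite tofrac1 divr1.
Qed.

Lemma localize_sub m S Y : is_loc_Lsubmod act m Y -> S `<=` Y -> localize m S `<=` Y.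
Proof. by move=> HY SY _ [x [s [Sx ns ->]]]; apply: loc_Lsubmod_inv HY ns (SY x Sx). Qed.

Lemma localize_scale_eq m N M r : maximal_ideal m -> ~ m r -> N `<=` M ->
  (forall x, M x -> N (r%:F *: x)) -> localize m N = localize m M.
Proof.
move=> Mm nr NM rMN; apply/seteqP; split=> _ [x [s [Sx ns ->]]].
  by exists x, s; split=> //; exact: NM.
exists (r%:F *: x), (r * s); split; [exact: rMN|exact: max_notM|].
rewrite scalerA tofracM invfM mulrAC mulVf ?mul1r // tofrac_eq0.
exact: max_neq0 Mm nr.
Qed.

(* [U = r c / b] with [b] a unit at [m]: multiplying by [U] factors through [r]. *)
Lemma loc_Lsubmod_divide m Y U b r c x : maximal_ideal m ->
  is_loc_Lsubmod act m Y -> ~ m b -> U * b = r * c ->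
  Y (r%:F *: x) -> Y (U%:F *: x).
Proof.
move=> Mm HY nb e Yrx.
have b0 : b%:F != 0 by rewrite tofrac_eq0; exact: max_neq0 Mm nb.
have -> : U%:F *: x = (b%:F)^-1 *: (c%:F *: (r%:F *: x)).
  rewrite !scalerA; congr (_ *: _).
  by rewrite -tofracM [c * r]mulrC -e tofracM mulrCA mulVf ?mulr1.
apply: (loc_Lsubmod_inv HY nb).
exact: LsubmodZ (loc_Lsubmod_Lsubmod Mm HY) Yrx.
Qed.

Lemma Lsubmod_local_global Y x : is_Lsubmod act Y ->
  (forall m, maximal_ideal m -> exists2 D, ~ m D & Y (D%:F *: x)) -> Y x.
Proof.
move=> HY loc; pose J := [set a : R | Y (a%:F *: x)].
have IJ : is_ideal J.
  split; first by rewrite /J /= tofrac0 scale0r; exact: Lsubmod0.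
  split=> [a b Ja Jb|a b Jb]; rewrite /J /=.
    by rewrite tofracD scalerDl; exact: LsubmodD.
  by rewrite tofracM -scalerA; exact: LsubmodZ.
have J1 : J 1.
  apply: contrapT => J1; have [m Mm Jm] := exists_maximal_ideal IJ J1.
  by have [D nD YD] := loc m Mm; apply: nD; apply: Jm.
by move: J1; rewrite /J /= tofrac1 scale1r.
Qed.

Definition Lspan n (g : 'I_n -> V) : set V :=
  [set v | exists l : 'I_n -> L, v = \sum_(i < n) act (g i) (l i)].

Lemma Lspan_min Y n (g : 'I_n -> V) :
  is_Lsubmod act Y -> (forall i, Y (g i)) -> Lspan g `<=` Y.
Proof. by move=> HY Yg x [l ->]; apply: Lsubmod_sum => // i; exact: LsubmodA. Qed.

(* [s] generates [N] up to multipliers outside [m], i.e. it generates [N_m]. *)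
Definition generates_at m N (s : seq V) :=
  forall Y, is_Lsubmod act Y -> (forall y, y \in s -> Y y) ->
    forall x, N x -> exists2 D, ~ m D & Y (D%:F *: x).

Section Action.
Hypothesis act_right : is_right_action act.

Lemma act1 v : act v 1 = v. Proof. by case: act_right. Qed.
Lemma actM v a b : act v (a * b) = act (act v a) b. Proof. by case: act_right => _ []. Qed.
Lemma actDl u v a : act (u + v) a = act u a + act v a. Proof. by case: act_right => _ []. Qed.
Lemma actDr v a b : act v (a + b) = act v a + act v b. Proof. by case: act_right => _ []. Qed.
Lemma actZl k v a : act (k *: v) a = k *: act v a. Proof. by case: act_right => _ []. Qed.
Lemma actZr (r : R) v a : act v (r *: a) = r%:F *: act v a. Proof. by case: act_right => _ []. Qed.

Lemma act0l a : act 0 a = 0.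
Proof. by have := actZl 0 0 a; rewrite !scale0r. Qed.

Lemma act0r v : act v 0 = 0.
Proof. by have := actZr 0 v 0; rewrite scale0r tofrac0 scale0r. Qed.

Lemma act_suml n (f : 'I_n -> V) a : act (\sum_i f i) a = \sum_i act (f i) a.
Proof. by elim/big_rec2: _ => [|i y1 y2 _ <-]; [exact: act0l|exact: actDl]. Qed.

Lemma Lspan_Lsubmod n (g : 'I_n -> V) : is_Lsubmod act (Lspan g).
Proof.
split.
- by exists (fun _ => 0); rewrite big1 // => i _; rewrite act0r.
- move=> x y [l ->] [l' ->]; exists (fun i => l i + l' i).
  by rewrite -big_split; apply: eq_bigr => i _; rewrite actDr.
- move=> r x [l ->]; exists (fun i => r *: l i).
  by rewrite scaler_sumr; apply: eq_bigr => i _; rewrite actZr.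
- move=> x a [l ->]; exists (fun i => l i * a).
  by rewrite act_suml; apply: eq_bigr => i _; rewrite actM.
Qed.

Lemma Lspan_gen n (g : 'I_n -> V) i : Lspan g (g i).
Proof.
exists (fun j => if j == i then 1 else 0).
rewrite (bigD1 i) //= eqxx act1 big1 ?addr0 // => j /negbTE ->.
exact: act0r.
Qed.

Lemma Lspan_scale Y n (g : 'I_n -> V) (r : R) : is_Lsubmod act Y ->
  (forall i, Y (r%:F *: g i)) -> forall x, Lspan g x -> Y (r%:F *: x).
Proof.
move=> HY Yg x [l ->]; rewrite scaler_sumr; apply: Lsubmod_sum => // i.
by rewrite -actZl; exact: LsubmodA.
Qed.

Lemma full_scale_Lspan Y n (g : 'I_n -> V) : is_Lsubmod act Y -> full Y ->
  exists2 r : R, r != 0 & forall x, Lspan g x -> Y (r%:F *: x).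
Proof.
move=> HY Yfull.
have /choice[d Hd] : forall i, exists d : R, d != 0 /\ Y (d%:F *: g i).
  by move=> i; have [d d0 Yd] := Yfull (g i); exists d.
exists (\prod_i d i); first by apply/prodf_neq0 => i _; case: (Hd i).
apply: Lspan_scale => // i; rewrite (bigD1 i) //= mulrC tofracM -scalerA.
by apply: LsubmodZ => //; case: (Hd i).
Qed.

Lemma fg_Lmod_of_generates N (s : seq V) : is_Lsubmod act N ->
  (forall y, y \in s -> N y) ->
  (forall m, maximal_ideal m -> generates_at m N s) -> fg_Lmod act N.
Proof.
move=> HN sN gen; pose g (i : 'I_(size s)) := nth 0 s i.
have HY := Lspan_Lsubmod g.
have sY y : y \in s -> Lspan g y.
  move=> ys; rewrite -(nth_index 0 ys).
  exact: (Lspan_gen g (Ordinal (etrans (index_mem y s) ys))).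
exists (size s), g; split; first by move=> i; apply/sN/mem_nth.
apply/seteqP; split; last by apply: Lspan_min => // i; apply/sN/mem_nth.
move=> x Nx; apply: (Lsubmod_local_global HY) => m Mm.
exact: gen m Mm _ HY sY x Nx.
Qed.

Lemma fg_loc_generates_at m N : maximal_ideal m ->
  fg_loc_Lmod act m (localize m N) ->
  exists s, (forall y, y \in s -> N y) /\ generates_at m N s.
Proof.
move=> Mm [k [h [Nh Ndef]]].
have /choice[yt Hyt] : forall i, exists yt : V * R,
    [/\ N yt.1, ~ m yt.2 & h i = (yt.2%:F)^-1 *: yt.1].
  by move=> i; have [y [t [Ny nt e]]] := Nh i; exists (y, t).
exists [seq (yt i).1 | i <- enum 'I_k]; split=> [_ /mapP[i _ ->]|Y HY Yys x Nx].
  by case: (Hyt i).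
have : localize m N x by exact: localize_self.
rewrite Ndef => -[l [s [ns ->]]].
exists (\prod_i (s i * (yt i).2)).
  by apply: max_prod_notin => // i _; apply: max_notM => //; case: (Hyt i).
have -> : \sum_i ((s i)%:F)^-1 *: act (h i) (l i) =
          \sum_i ((s i * (yt i).2)%:F)^-1 *: act (yt i).1 (l i).
  apply: eq_bigr => i _; case: (Hyt i) => _ _ ->.
  by rewrite actZl scalerA tofracM invfM.
apply: Lsubmod_clear_denoms => // i.
  case: (Hyt i) => _ nt _.
  by rewrite mulf_neq0 //; [exact: max_neq0 Mm (ns i)|exact: max_neq0 Mm nt].
by apply: LsubmodA => //; apply: Yys; apply/mapP; exists i; rewrite ?mem_enum.
Qed.

Lemma scaled_Lspan_generates_at m N n (g : 'I_n -> V) r : ~ m r ->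
  N `<=` Lspan g -> generates_at m N [seq r%:F *: g i | i <- enum 'I_n].
Proof.
move=> nr Ng Y HY Yg x Nx; exists r => //.
apply: (Lspan_scale HY); last exact: Ng.
by move=> i; apply: Yg; apply/mapP; exists i; rewrite ?mem_enum.
Qed.

End Action.

End Modules.

Section LocalGlobal.
Variables (R : idomainType) (L : algType R) (V : lmodType {fraction R}).
Variables (act : V -> L -> V) (M : set V) (X : set R -> set V).
Hypotheses (hlR : h_local R) (act_right : is_right_action act).
Hypotheses (M_Lsubmod : is_Lsubmod act M) (MQ : tensorQ M = [set: V]).
Hypothesis X_loc : forall m, maximal_ideal m ->
  [/\ is_loc_Lsubmod act m (X m), X m `<=` localize m M &
      tensorQ (X m) = tensorQ (localize m M)].
Variables (n : nat) (g : 'I_n -> V).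
Hypothesis M_span : M = Lspan act g.
Local Notation "x %:F" := (@tofrac R x).

Definition realizes N := [/\ is_Lsubmod act N, N `<=` M &
  forall m, maximal_ideal m -> localize m N = X m].

Definition deviation := [set m : set R | maximal_ideal m /\ X m <> localize m M].

Lemma X_Lsubmod m : maximal_ideal m -> is_Lsubmod act (X m).
Proof. by move=> Mm; have [XL _ _] := X_loc Mm; exact: loc_Lsubmod_Lsubmod XL. Qed.

Lemma X_full m : maximal_ideal m -> full (X m).
Proof.
move=> Mm; apply: (tensorQ_setT_full (X_Lsubmod Mm)).
have [_ _ ->] := X_loc Mm; apply/seteqP; split=> // v _.
by apply: (tensorQ_mono (localize_self Mm)); rewrite MQ.
Qed.

Lemma scale_M_X m : maximal_ideal m ->
  exists2 r : R, r != 0 & forall x, M x -> X m (r%:F *: x).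
Proof.
move=> Mm; have := full_scale_Lspan act_right g (X_Lsubmod Mm) (X_full Mm).
by rewrite -M_span.
Qed.

Lemma realizes_scale_M N : realizes N ->
  exists2 r : R, r != 0 & forall x, M x -> N (r%:F *: x).
Proof.
case=> HN _ NX; have [m Mm] := exists_maximal R.
rewrite M_span; apply: (full_scale_Lspan act_right g HN) => v.
have [d d0] := X_full Mm v; rewrite -NX // => -[y [s [Ny ns e]]].
have s0 : s%:F != 0 by rewrite tofrac_eq0; exact: max_neq0 Mm ns.
exists (s * d); first by apply: mulf_neq0; rewrite // -tofrac_eq0.
by rewrite tofracM -scalerA e scalerA mulfV ?scale1r.
Qed.

Lemma realizes_finite_deviation N : realizes N -> finite_set deviation.
Proof.
move=> NR; have [r r0 rMN] := realizes_scale_M NR; have [_ NM NX] := NR.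
apply: sub_finite_set (hlR.1 r r0) => m [Mm XM]; split=> //.
by apply: contrapT => mr; apply: XM; rewrite -NX //; exact: localize_scale_eq Mm mr NM rMN.
Qed.

Lemma finite_deviation_scale_M : finite_set deviation ->
  exists2 r : R, r != 0 & forall m x, maximal_ideal m -> M x -> X m (r%:F *: x).
Proof.
move=> fin; have /choice[d Hd] : forall m, exists d : R, maximal_ideal m ->
    d != 0 /\ forall x, M x -> X m (d%:F *: x).
  move=> m; have [Mm|] := EM (maximal_ideal m); last by exists 1.
  by have [d d0 dX] := scale_M_X Mm; exists d.
exists (\prod_(m <- fset_set deviation) d m).
  rewrite prodf_seq_neq0; apply/allP => m.
  by rewrite in_fset_set // => /set_mem[/Hd[d0 _]].
move=> m x Mm Mx; have [mdev|mgood] := EM (deviation m).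
  have [q ->] := prod_fset_set_factor d fin mdev.
  by rewrite mulrC tofracM -scalerA; apply: LsubmodZ (X_Lsubmod Mm) _; exact: (Hd m Mm).2.
have -> : X m = localize m M by apply: contrapT => XM; apply: mgood.
by apply: (localize_self Mm); exact: LsubmodZ M_Lsubmod Mx.
Qed.

Definition glue := [set x | M x /\ forall m, maximal_ideal m -> X m x].

Lemma glue_Lsubmod : is_Lsubmod act glue.
Proof.
split.
- by split=> [|m Mm]; [exact: Lsubmod0 M_Lsubmod|exact: Lsubmod0 (X_Lsubmod Mm)].
- move=> x y [Mx Xx] [My Xy]; split=> [|m Mm]; first exact: LsubmodD M_Lsubmod Mx My.
  exact: LsubmodD (X_Lsubmod Mm) (Xx m Mm) (Xy m Mm).
- move=> r x [Mx Xx]; split=> [|m Mm]; first exact: LsubmodZ M_Lsubmod Mx.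
  exact: LsubmodZ (X_Lsubmod Mm) (Xx m Mm).
- move=> x a [Mx Xx]; split=> [|m Mm]; first exact: LsubmodA M_Lsubmod Mx.
  exact: LsubmodA (X_Lsubmod Mm) (Xx m Mm).
Qed.

Lemma localize_glue m : finite_set deviation -> maximal_ideal m ->
  localize m glue = X m.
Proof.
move=> fin Mm; have [r r0 rX] := finite_deviation_scale_M fin.
have [XL XM _] := X_loc Mm.
apply/seteqP; split; first by apply: (localize_sub XL) => x [_ /(_ m Mm)].
move=> y Xy; have [x [s [Mx ns ey]]] := XM y Xy; subst y.
have s0 : s%:F != 0 by rewrite tofrac_eq0; exact: max_neq0 Mm ns.
have [U nU Udiv] := hlocal_multiplier hlR r0 Mm.
exists (U%:F *: x), (s * U); split; last 2 first.
- exact: max_notM Mm ns nU.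
- by rewrite scalerA tofracM invfM -mulrA mulVf ?mulr1 // tofrac_eq0; exact: max_neq0 Mm nU.
split=> [|m' Mm']; first exact: LsubmodZ M_Lsubmod Mx.
have [->|ne] := EM (m' = m).
  have -> : U%:F *: x = (U * s)%:F *: ((s%:F)^-1 *: x) by rewrite scalerA tofracM mulfK.
  exact: LsubmodZ (X_Lsubmod Mm) Xy.
have [b [c [nb e]]] := Udiv m' Mm' ne; have [XL' _ _] := X_loc Mm'.
exact: loc_Lsubmod_divide Mm' XL' nb e (rX m' x Mm' Mx).
Qed.

Lemma finite_deviation_realizes : finite_set deviation -> realizes glue.
Proof. by move=> fin; split=> [|x []//|m]; [exact: glue_Lsubmod|exact: localize_glue fin]. Qed.

Lemma realizes_fg N : (forall m, maximal_ideal m -> fg_loc_Lmod act m (X m)) ->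
  realizes N -> fg_Lmod act N.
Proof.
move=> Xfg NR; have [r r0 rMN] := realizes_scale_M NR; have [HN NM NX] := NR.
pose B := [set m | maximal_ideal m /\ m r].
have fB : finite_set B := hlR.1 r r0.
have /choice[gens Hgens] : forall m, exists s, B m ->
    (forall y, y \in s -> N y) /\ generates_at act m N s.
  move=> m; have [[Mm _]|] := EM (B m); last by exists [::].
  have [|s Hs] := fg_loc_generates_at act_right (N := N) Mm; last by exists s.
  by rewrite NX //; exact: Xfg.
pose s0 := [seq r%:F *: g i | i <- enum 'I_n].
pose s := s0 ++ flatten [seq gens m | m <- fset_set B].
apply: (fg_Lmod_of_generates act_right (s := s) HN).
  move=> y; rewrite mem_cat => /orP[/mapP[i _ ->]|/flatten_mapP[m mB ys]].
    by apply: rMN; rewrite M_span; exact: Lspan_gen.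
  by move: mB; rewrite in_fset_set // => /set_mem/Hgens[+ _]; apply.
move=> m Mm Y HY sY; have [mr|nr] := EM (m r).
  apply: (Hgens m (conj Mm mr)).2 => // y yg; apply: sY.
  rewrite mem_cat; apply/orP; right; apply/flatten_mapP; exists m => //.
  by rewrite in_fset_set //; apply: mem_set.
have NL : N `<=` Lspan act g by rewrite -M_span.
apply: (scaled_Lspan_generates_at act_right nr NL) => // y ys0.
by apply: sY; rewrite mem_cat ys0.
Qed.

End LocalGlobal.

Theorem mainTheorem15 (R : idomainType) (L : algType R)
  (V : lmodType {fraction R}) (act : V -> L -> V)
  (M : set V) (X : set R -> set V) :
  h_local R ->
  is_right_action act ->
  is_Lsubmod act M -> fg_Lmod act M ->
  tensorQ M = [set: V] ->
  (forall m, maximal_ideal m ->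
     [/\ is_loc_Lsubmod act m (X m), X m `<=` localize m M &
         tensorQ (X m) = tensorQ (localize m M)]) ->
  ((exists N : set V, [/\ is_Lsubmod act N, N `<=` M &
        forall m, maximal_ideal m -> localize m N = X m]) <->
   finite_set [set m : set R | maximal_ideal m /\ X m <> localize m M])
  /\
  ((forall m, maximal_ideal m -> fg_loc_Lmod act m (X m)) ->
   forall N : set V, is_Lsubmod act N -> N `<=` M ->
     (forall m, maximal_ideal m -> localize m N = X m) ->
     fg_Lmod act N).
Proof.
move=> hlR act_right M_Lsubmod [n [g [_ M_span]]] MQ X_loc.
have deviation_finite := realizes_finite_deviation hlR act_right MQ X_loc M_span.
have glue_realizes := finite_deviation_realizes hlR act_right M_Lsubmod MQ X_loc M_span.
have realization_fg := realizes_fg hlR act_right MQ X_loc M_span.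
split; first by split=> [[N /deviation_finite]//|/glue_realizes NR]; exists (glue M X).
by move=> Xfg N HN NM NX; apply: realization_fg Xfg _; split.
Qed.
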